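(* For every integer $n\geq 2$, every $1\leq i\leq n-1$ and every integer $0\leq s < i/2$, we have $w_{i,s}' < w_{i,s}$.
   Context: In $\{0,1,2\}^n$ (ordered coordinatewise), $L_i$ is the set of vectors with coordinate sum $i$, $L_i^s$ the elements of $L_i$ with exactly $s$ coordinates equal to $2$, $L_i^{\geq s}=\bigcup_{r\geq s}L_i^r$, $L_i^{\leq s}=\bigcup_{r\leq s}L_i^r$. For such $i,s$: \[w_{i,s}=\frac{|L_i||L_{i+1}^{\geq s+1}| - |L_{i+1}||L_i^{\geq s+1}|}{|L_i^s||L_i||L_{i+1}|(i-2s)},\qquad w_{i,s}'=\frac{|L_i||L_{i+1}^{\leq s}| - |L_{i+1}||L_i^{\leq s-1}|}{|L_i^s||L_i||L_{i+1}|(n-i+s)}.\] *)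

From HB Require Import structures.
From mathcomp Require Import all_boot all_order all_algebra.
Set Implicit Arguments. Unset Strict Implicit. Unset Printing Implicit Defensive.
Import Order.TTheory GRing.Theory Num.Theory.

Definition vec (n : nat) := {ffun 'I_n -> 'I_3}.

Definition vsum n (x : vec n) : nat := \sum_(j < n) (x j : nat).
Definition ntwo n (x : vec n) : nat := #|[set j : 'I_n | (x j : nat) == 2]|.

Definition L n i : {set vec n} := [set x : vec n | vsum x == i].
Definition Ls n i s : {set vec n} := [set x : vec n | (vsum x == i) && (ntwo x == s)].
Definition Lge n i s : {set vec n} := [set x : vec n | (vsum x == i) && (s <= ntwo x)].
Definition Lle n i s : {set vec n} := [set x : vec n | (vsum x == i) && (ntwo x <= s)].

Local Open Scope ring_scope.

Definition w (n i s : nat) : rat :=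
  ((#|L n i|%:R * #|Lge n i.+1 s.+1|%:R - #|L n i.+1|%:R * #|Lge n i s.+1|%:R)
   / (#|Ls n i s|%:R * #|L n i|%:R * #|L n i.+1|%:R * (i%:R - 2 * s%:R))).

(* note: L_i^{<= s-1} for s = 0 is empty; in nat, (s-1) truncates to 0, so we
   use the set of x with ntwo x < s instead *)
Definition Llt n i s : {set vec n} := [set x : vec n | (vsum x == i) && (ntwo x < s)%N].

Definition w' (n i s : nat) : rat :=
  ((#|L n i|%:R * #|Lle n i.+1 s|%:R - #|L n i.+1|%:R * #|Llt n i s|%:R)
   / (#|Ls n i s|%:R * #|L n i|%:R * #|L n i.+1|%:R * (n%:R - i%:R + s%:R))).

From HB Require Import structures.
From mathcomp Require Import all_boot all_order all_algebra.
From mathcomp Require Import zify ring lra.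
Set Implicit Arguments. Unset Strict Implicit. Unset Printing Implicit Defensive.
Import Order.TTheory GRing.Theory Num.Theory.

(* Write a_t = |L_i^t| and b_t = |L_{i+1}^t|.  Double counting the ways of
   raising one coordinate of a vector (0 -> 1, resp. 1 -> 2) gives
     a_t (n + t - i) = b_t (i + 1 - 2t)   and   a_t (i - 2t) = b_{t+1} (t + 1),
   hence a_t (n - t) = b_t (i + 1 - 2t) + b_{t+1} (t + 1).  Dividing by n - t,
   the sums of a over a tail t >= m are sums of b_t weight_t up to a boundary
   term, where weight_t = (i + 1 - 2t)/(n - t) + t/(n - t + 1) decreases on the
   support of b.  Clearing denominators, w'_{i,s} < w_{i,s} amounts to
     |L_{i+1}| a_s (i - 2s) < (|L_i| |L_{i+1}^{>s}| - |L_{i+1}| |L_i^{>s}|) (n - s),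
   and the boundary term cancels the left-hand side exactly, leaving Chebyshev's
   sum inequality for the decreasing weight across the split t <= s < t'. *)

Lemma card_set_pred (T : finType) (P : pred T) :
  #|[set x | P x]| = \sum_(x : T) (P x : nat).
Proof. by rewrite -sum1dep_card big_mkcond; apply: eq_bigr => x _; case: (P x). Qed.

Section Vectors.
Variable n : nat.
Implicit Types (x y : vec n) (j : 'I_n) (v : 'I_3).

Definition digit_count x v := #|[set j | x j == v]|.

Definition upd x j v : vec n := [ffun k => if k == j then v else x k].

Lemma upd_eq x j v : upd x j v j = v.
Proof. by rewrite ffunE eqxx. Qed.

Lemma upd_id x j : upd x j (x j) = x.
Proof. by apply/ffunP => k; rewrite ffunE; case: eqP => // ->. Qed.

Lemma upd_upd x j v v' : upd (upd x j v) j v' = upd x j v'.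
Proof. by apply/ffunP => k; rewrite !ffunE; case: eqP. Qed.

Lemma sum_upd (g : 'I_3 -> nat) x j v :
  (\sum_k g (upd x j v k) + g (x j) = \sum_k g (x k) + g v)%N.
Proof.
rewrite (bigD1 j) //= [in RHS](bigD1 j) //= upd_eq.
rewrite (eq_bigr (fun k => g (x k))) => [|k /negbTE kj]; last by rewrite ffunE kj.
ring.
Qed.

Lemma ntwoE x : ntwo x = \sum_k (((x k : nat) == 2%N) : nat).
Proof. exact: card_set_pred. Qed.

Lemma vsum_upd x j v : (vsum (upd x j v) + x j = vsum x + v)%N.
Proof. exact: (sum_upd (fun a => nat_of_ord a)). Qed.

Lemma ntwo_upd x j v :
  (ntwo (upd x j v) + ((x j : nat) == 2%N) = ntwo x + ((v : nat) == 2%N))%N.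
Proof. by rewrite !ntwoE; apply: (sum_upd (fun a : 'I_3 => ((a : nat) == 2%N) : nat)). Qed.

Lemma sum_digit_count (S : {set vec n}) v :
  (\sum_(x in S) digit_count x v = \sum_j #|[set x in S | x j == v]|)%N.
Proof.
under eq_bigr do rewrite /digit_count card_set_pred.
rewrite exchange_big; apply: eq_bigr => j _.
by rewrite card_set_pred big_mkcond; apply: eq_bigr => x _; case: (x \in S).
Qed.

Lemma double_count_upd (S1 S2 : {set vec n}) v v' :
  (forall x j, x \in S1 -> x j = v -> upd x j v' \in S2) ->
  (forall y j, y \in S2 -> y j = v' -> upd y j v \in S1) ->
  (\sum_(x in S1) digit_count x v = \sum_(y in S2) digit_count y v')%N.
Proof.
move=> to2 to1; rewrite !sum_digit_count; apply: eq_bigr => j _.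
have inj : {in [set x in S1 | x j == v] &, injective (fun x => upd x j v')}.
  move=> x1 x2; rewrite !inE => /andP [_ /eqP e1] /andP [_ /eqP e2] e.
  by rewrite -(upd_id x1 j) -(upd_id x2 j) e1 e2 -(upd_upd x1 j v' v) e upd_upd.
rewrite -(card_in_imset inj); apply: eq_card => y; rewrite !inE.
apply/imsetP/andP => [[x] | [yS /eqP yj]].
  by rewrite inE => /andP [xS /eqP xj] ->; rewrite upd_eq to2.
exists (upd y j v); first by rewrite inE to1 //= upd_eq.
by rewrite upd_upd -yj upd_id.
Qed.

Definition o0 : 'I_3 := @Ordinal 3 0 isT.
Definition o1 : 'I_3 := @Ordinal 3 1 isT.
Definition o2 : 'I_3 := @Ordinal 3 2 isT.

Lemma digit_count2 x : digit_count x o2 = ntwo x.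
Proof.
rewrite ntwoE /digit_count card_set_pred; apply: eq_bigr => k _.
by case: (x k) => [[|[|[|m]]] ?].
Qed.

Lemma vsum_digit_count x : vsum x = (digit_count x o1 + 2 * ntwo x)%N.
Proof.
rewrite ntwoE /digit_count card_set_pred /vsum big_distrr -big_split.
by apply: eq_bigr => k _; case: (x k) => [[|[|[|m]]] ?].
Qed.

Lemma digit_count_total x :
  n = (digit_count x o0 + digit_count x o1 + ntwo x)%N.
Proof.
rewrite ntwoE /digit_count !card_set_pred -!big_split.
rewrite -[n in LHS]card_ord -sum1_card.
by apply: eq_bigr => k _; case: (x k) => [[|[|[|m]]] ?].
Qed.

Lemma mem_Ls x k t : (x \in Ls n k t) = (vsum x == k) && (ntwo x == t).
Proof. by rewrite inE. Qed.

Lemma digit_count_Ls x k t : x \in Ls n k t ->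
  (digit_count x o0 + k = n + t)%N /\ (digit_count x o1 + 2 * t = k)%N.
Proof.
rewrite mem_Ls => /andP [/eqP xk /eqP xt].
by have := vsum_digit_count x; have := digit_count_total x; split; lia.
Qed.

Lemma Ls_eq0 k t : (k < 2 * t)%N -> Ls n k t = set0.
Proof.
move=> kt; apply/setP => x; rewrite in_set0.
by apply/negP => /digit_count_Ls [_]; lia.
Qed.

Lemma upd_in_Ls x j v k t k' t' : x \in Ls n k t ->
  (k + v = k' + x j)%N -> (t + ((v : nat) == 2%N) = t' + ((x j : nat) == 2%N))%N ->
  upd x j v \in Ls n k' t'.
Proof.
rewrite !mem_Ls => /andP [/eqP <- /eqP <-] ek et.
have := vsum_upd x j v; have := ntwo_upd x j v.
by move=> *; apply/andP; split; apply/eqP; lia.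
Qed.

(* Both sides count the pairs (x, j) with x in L_k^t and x j = 0, through
   raising x j to 1; stated additively to avoid truncated subtraction. *)
Lemma card_Ls_raise0 k t :
  (#|Ls n k t| * (n + t) + #|Ls n k.+1 t| * (2 * t) =
   #|Ls n k t| * k + #|Ls n k.+1 t| * k.+1)%N.
Proof.
have dc : (\sum_(x in Ls n k t) digit_count x o0 =
           \sum_(y in Ls n k.+1 t) digit_count y o1)%N.
  apply: double_count_upd => x j xS xj; apply: (upd_in_Ls xS); rewrite xj /=; lia.
rewrite -!sum_nat_const.
rewrite (eq_bigr (fun x => digit_count x o0 + k)%N); last first.
  by move=> x /digit_count_Ls [->].
rewrite [X in (_ = _ + X)%N](eq_bigr (fun y => digit_count y o1 + 2 * t)%N); last first.
  by move=> y /digit_count_Ls [_ ->].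
rewrite big_split [in RHS]big_split /= dc; ring.
Qed.

(* The same with x j = 1 raised to 2, from L_k^t to L_{k+1}^{t+1}. *)
Lemma card_Ls_raise1 k t :
  (#|Ls n k t| * (2 * t) + #|Ls n k.+1 t.+1| * t.+1 = #|Ls n k t| * k)%N.
Proof.
have dc : (\sum_(x in Ls n k t) digit_count x o1 =
           \sum_(y in Ls n k.+1 t.+1) digit_count y o2)%N.
  apply: double_count_upd => x j xS xj; apply: (upd_in_Ls xS); rewrite xj /=; lia.
rewrite -!sum_nat_const.
rewrite [RHS](eq_bigr (fun x => digit_count x o1 + 2 * t)%N); last first.
  by move=> x /digit_count_Ls [_ ->].
rewrite [X in (_ + X = _)%N](eq_bigr (digit_count ^~ o2)); last first.
  by move=> y; rewrite digit_count2 mem_Ls => /andP [_ /eqP].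
rewrite [RHS]big_split /= dc; ring.
Qed.

Lemma card_Ls_gt0 k t : (2 * t <= k <= n + t)%N -> (0 < #|Ls n k t|)%N.
Proof.
elim: k t => [|k IH] t /andP [tk kn].
  have -> : t = 0%N by lia.
  apply/card_gt0P; exists [ffun=> o0]; rewrite mem_Ls.
  rewrite /vsum ntwoE !big1 // => j _; by rewrite ffunE.
have [tk' | tk'] := leqP (2 * t) k.
  have := card_Ls_raise0 k t; have := IH t; rewrite tk'; nia.
case: t tk tk' kn => [|t] tk tk' kn; first by [].
have := card_Ls_raise1 k t; have := IH t; nia.
Qed.

Lemma ntwo_le x : (ntwo x <= n)%N.
Proof. by rewrite /ntwo -[X in (_ <= X)%N]card_ord max_card. Qed.

Lemma card_vsum_ntwo k (P : pred nat) :
  #|[set x : vec n | (vsum x == k) && P (ntwo x)]| =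
  (\sum_(t < n.+1 | P t) #|Ls n k t|)%N.
Proof.
rewrite -sum1_card (partition_big (fun x => inord (ntwo x) : 'I_n.+1) (P \o val)) /=.
  apply: eq_bigr => t Pt; rewrite -sum1_card; apply: eq_bigl => x.
  rewrite !inE -(inj_eq val_inj) /= inordK ?ltnS ?ntwo_le //.
  by case: (ntwo x =P t) => [->|]; rewrite ?Pt ?andbT ?andbF.
by move=> x; rewrite inE => /andP [_]; rewrite inordK ?ltnS ?ntwo_le.
Qed.

Lemma card_L_sum k : #|L n k| = (\sum_(0 <= t < n.+1) #|Ls n k t|)%N.
Proof.
rewrite big_mkord -(card_vsum_ntwo _ xpredT).
by apply: eq_card => x; rewrite !inE andbT.
Qed.

Lemma card_Lge_sum k s : #|Lge n k s| = (\sum_(s <= t < n.+1) #|Ls n k t|)%N.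
Proof. by rewrite big_geq_mkord -(card_vsum_ntwo _ (leq s)). Qed.

Lemma card_Llt_sum k s :
  (s <= n.+1)%N -> #|Llt n k s| = (\sum_(0 <= t < s) #|Ls n k t|)%N.
Proof.
move=> sn; rewrite (big_nat_widen _ _ _ _ _ sn) big_mkord.
exact: card_vsum_ntwo _ (gtn s).
Qed.

Lemma card_Lle_sum k s :
  (s <= n)%N -> #|Lle n k s| = (\sum_(0 <= t < s.+1) #|Ls n k t|)%N.
Proof.
move=> sn; rewrite -card_Llt_sum //; apply: eq_card => x; by rewrite !inE ltnS.
Qed.

Lemma card_L_gt0 k t : (0 < #|Ls n k t|)%N -> (0 < #|L n k|)%N.
Proof.
move/leq_trans; apply; apply: subset_leq_card.
by apply/subsetP => x; rewrite !inE => /andP [].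
Qed.

End Vectors.

Local Open Scope ring_scope.

Lemma shifted_ratios_lt (R : realFieldType) (A c k : R) :
  2 <= A -> 2 <= c -> 0 <= k -> c + k <= A ->
  (c - 2) / (A - 1) + (k + 1) / A < c / A + k / (A + 1).
Proof.
move=> A2 c2 k0 ckA; rewrite -subr_gt0.
have -> : c / A + k / (A + 1) - ((c - 2) / (A - 1) + (k + 1) / A) =
          ((A + 1) * (A + 1 - c) - k * (A - 1)) / (A * (A - 1) * (A + 1)).
  by field; apply/and3P; split; apply/negP => /eqP; lra.
by apply: divr_gt0; [nra | rewrite !mulr_gt0 //; lra].
Qed.

Section WeightedSums.
Variables (R : realFieldType) (n i s : nat) (a b : nat -> R).
Hypothesis b_ge0 : forall t, 0 <= b t.
Hypothesis raise0 :
  forall t, a t * (n%:R + t%:R - i%:R) = b t * (i%:R + 1 - 2 * t%:R).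
Hypothesis raise1 : forall t, a t * (i%:R - 2 * t%:R) = b t.+1 * t.+1%:R.
Hypothesis b_eq0 : forall t, (i.+1 < 2 * t)%N -> b t = 0.
Hypothesis i_lt_n : (i < n)%N.
Hypothesis s_lt_i : (2 * s < i)%N.
Hypothesis a_s_gt0 : 0 < a s.

Definition weight t : R :=
  (i%:R + 1 - 2 * t%:R) / (n%:R - t%:R) + t%:R / (n%:R - t%:R + 1).
Definition boundary t : R := b t * t%:R / (n%:R - t%:R + 1).

Lemma weight_step k : (2 * k.+1 <= i.+1)%N -> weight k.+1 < weight k.
Proof.
move=> ki; rewrite /weight -[k.+1%:R]natr1.
have kn : (k + 2)%:R <= n%:R :> R by rewrite ler_nat; lia.
have ki' : (2 * k + 2)%:R <= (i + 1)%:R :> R by rewrite ler_nat; lia.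
have ni : (i + 1)%:R <= n%:R :> R by rewrite ler_nat; lia.
rewrite !natrD in kn ki' ni.
have -> : n%:R - (k%:R + 1) + 1 = n%:R - k%:R :> R by ring.
have -> : i%:R + 1 - 2 * (k%:R + 1) = i%:R + 1 - 2 * k%:R - 2 :> R by ring.
have -> : n%:R - (k%:R + 1) = n%:R - k%:R - 1 :> R by ring.
apply: shifted_ratios_lt; rewrite ?ler0n //; lra.
Qed.

Lemma weight_le r t : (r <= t)%N -> (2 * t <= i.+1)%N -> weight t <= weight r.
Proof.
elim: t => [|t IH] rt ti; first by move: rt; rewrite leqn0 => /eqP ->.
case: (ltngtP r t.+1) rt => // [rt _ | -> //].
by apply: le_trans (ltW (weight_step ti)) (IH _ _); lia.
Qed.

Lemma a_eq0 : a n = 0.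
Proof.
have := raise1 n; rewrite b_eq0; last by lia.
move/eqP; rewrite mul0r mulf_eq0 subr_eq0 => /orP [/eqP // | /eqP].
by move/eqP; rewrite -natrM eqr_nat; lia.
Qed.

Lemma b_weight_sub k :
  (k <= n)%N -> b k * weight k - a k = boundary k - boundary k.+1.
Proof.
rewrite leq_eqVlt => /orP [/eqP -> | kn].
  by rewrite /boundary a_eq0 !b_eq0 ?mul0r ?subrr //; lia.
have nk : n%:R - k%:R != 0 :> R by rewrite subr_eq0 eqr_nat; lia.
have nk1 : n%:R - k%:R + 1 != 0 :> R.
  by rewrite -natrB ?(ltnW kn) // natr1 pnatr_eq0.
have -> : a k = (b k * (i%:R + 1 - 2 * k%:R) + b k.+1 * k.+1%:R) / (n%:R - k%:R).
  by rewrite -raise0 -raise1; field.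
rewrite /boundary /weight -[k.+1%:R]natr1.
have -> : n%:R - (k%:R + 1) + 1 = n%:R - k%:R :> R by ring.
by field; rewrite nk nk1.
Qed.

Lemma sum_b_weight m : (m <= n.+1)%N ->
  \sum_(m <= t < n.+1) b t * weight t = boundary m + \sum_(m <= t < n.+1) a t.
Proof.
move=> mn; apply/eqP; rewrite -subr_eq -sumrB; apply/eqP.
rewrite (telescope_sumr_eq (fun t => - boundary t)) // => [|k /andP [_ kn]].
  by rewrite /boundary b_eq0 ?mul0r ?oppr0 ?sub0r ?opprK //; lia.
by rewrite b_weight_sub // opprK addrC.
Qed.

Lemma i_sub_2s_gt0 : 0 < i%:R - 2 * s%:R :> R.
Proof.
have si : (2 * s + 1)%:R <= i%:R :> R by rewrite ler_nat; lia.
by rewrite natrD natrM in si; lra.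
Qed.

Lemma n_add_s_sub_i_gt0 : 0 < n%:R + s%:R - i%:R :> R.
Proof. by rewrite -natrD -natrB ?ltr0n; lia. Qed.

Lemma b_s_gt0 : 0 < b s.
Proof.
have si := i_sub_2s_gt0.
rewrite -(pmulr_lgt0 _ (_ : 0 < i%:R + 1 - 2 * s%:R)); last by lra.
by rewrite -raise0 mulr_gt0 ?n_add_s_sub_i_gt0.
Qed.

Lemma b_s1_gt0 : 0 < b s.+1.
Proof. by rewrite -(pmulr_lgt0 _ (ltr0Sn R s)) -raise1 mulr_gt0 ?i_sub_2s_gt0. Qed.

(* Chebyshev's sum inequality for the two blocks t <= s < t' of the support
   of b, on which the weight is decreasing. *)
Lemma cross_weight_gt :
  (\sum_(0 <= t < s.+1) b t) * (\sum_(s.+1 <= t < n.+1) b t * weight t) <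
  (\sum_(0 <= t < s.+1) b t * weight t) * (\sum_(s.+1 <= t < n.+1) b t).
Proof.
set Bl := \sum_(0 <= t < s.+1) b t; set G1 := \sum_(s.+1 <= t < n.+1) b t.
have head_ge : weight s * Bl <= \sum_(0 <= t < s.+1) b t * weight t.
  rewrite mulr_sumr; apply: ler_sum_nat => t /andP [_ ts].
  by rewrite mulrC ler_wpM2l // weight_le //; lia.
have tail_le : \sum_(s.+1 <= t < n.+1) b t * weight t <= weight s.+1 * G1.
  rewrite mulr_sumr; apply: ler_sum_nat => t /andP [st _].
  have [it | ti] := ltnP i.+1 (2 * t); first by rewrite b_eq0 // !mul0r mulr0.
  by rewrite [X in _ <= X]mulrC ler_wpM2l // weight_le.
have Bl_gt0 : 0 < Bl.
  rewrite /Bl big_nat_recr //= ltr_wpDl ?b_s_gt0 //.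
  by apply: sumr_ge0 => t _; apply: b_ge0.
have G1_gt0 : 0 < G1.
  rewrite /G1 big_ltn; last by lia.
  by rewrite ltr_wpDr ?b_s1_gt0 //; apply: sumr_ge0 => t _; apply: b_ge0.
have ws : weight s.+1 < weight s by apply: weight_step; lia.
apply: (le_lt_trans (ler_wpM2l (ltW Bl_gt0) tail_le)).
apply: (lt_le_trans _ (ler_wpM2r (ltW G1_gt0) head_ge)).
by rewrite mulrA [weight s * Bl]mulrC ltr_pM2r // ltr_pM2l.
Qed.

Lemma sum_tail_gap :
  (\sum_(0 <= t < n.+1) b t) * a s * (i%:R - 2 * s%:R) <
  ((\sum_(0 <= t < n.+1) a t) * (\sum_(s.+1 <= t < n.+1) b t)
   - (\sum_(0 <= t < n.+1) b t) * (\sum_(s.+1 <= t < n.+1) a t)) * (n%:R - s%:R).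
Proof.
set N0 := \sum_(0 <= t < n.+1) a t; set N1 := \sum_(0 <= t < n.+1) b t.
set G0 := \sum_(s.+1 <= t < n.+1) a t; set G1 := \sum_(s.+1 <= t < n.+1) b t.
set P := \sum_(0 <= t < s.+1) b t * weight t.
set M := \sum_(s.+1 <= t < n.+1) b t * weight t.
set Bl := \sum_(0 <= t < s.+1) b t.
have sn : (s.+1 <= n.+1)%N by lia.
have N0E : N0 = P + M.
  have := sum_b_weight (leq0n n.+1).
  rewrite /boundary mulr0 mul0r add0r -/N0 => <-.
  exact: big_cat_nat.
have ME : M = boundary s.+1 + G0 by apply: sum_b_weight.
have N1E : N1 = Bl + G1 by apply: big_cat_nat.
have ns : 0 < n%:R - s%:R :> R by rewrite subr_gt0 ltr_nat; lia.
have boundaryE : boundary s.+1 * (n%:R - s%:R) = a s * (i%:R - 2 * s%:R).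
  rewrite /boundary raise1 -[s.+1%:R]natr1.
  have -> : n%:R - (s%:R + 1) + 1 = n%:R - s%:R :> R by ring.
  by field; rewrite gt_eqF.
have gapE : N0 * G1 - N1 * G0 - N1 * boundary s.+1 = P * G1 - Bl * M.
  by rewrite N0E N1E ME; ring.
rewrite -mulrA -boundaryE mulrA ltr_pM2r // -subr_gt0 gapE subr_gt0.
exact: cross_weight_gt.
Qed.
End WeightedSums.

Lemma card_Ls_raise0_ring (R : comPzRingType) n k t :
  #|Ls n k t|%:R * (n%:R + t%:R - k%:R) =
  #|Ls n k.+1 t|%:R * (k%:R + 1 - 2 * t%:R) :> R.
Proof.
have := congr1 (GRing.natmul (1 : R)) (card_Ls_raise0 n k t).
rewrite /= !natrD !natrM natrD -[k.+1%:R]natr1.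
set A := #|_|%:R; set B := #|_|%:R => e.
apply/eqP; rewrite -subr_eq0 -(subrr (A * k%:R + B * (k%:R + 1))).
rewrite -[in X in _ == X - _]e.
by apply/eqP; ring.
Qed.

Lemma card_Ls_raise1_ring (R : comPzRingType) n k t :
  #|Ls n k t|%:R * (k%:R - 2 * t%:R) = #|Ls n k.+1 t.+1|%:R * t.+1%:R :> R.
Proof.
have := congr1 (GRing.natmul (1 : R)) (card_Ls_raise1 n k t).
rewrite /= natrD !natrM; set A := #|_|%:R; set B := #|_|%:R => e.
by rewrite mulrBr -e; ring.
Qed.

Lemma ratio_lt_of_gap (R : realFieldType) (N0 N1 G0 G1 H1 K0 c p q : R) :
  0 < c -> 0 < N0 -> 0 < N1 -> 0 < p -> 0 < q ->
  N1 = H1 + G1 -> N0 = K0 + c + G0 ->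
  N1 * c * q < (N0 * G1 - N1 * G0) * (p + q) ->
  (N0 * H1 - N1 * K0) / (c * N0 * N1 * p) < (N0 * G1 - N1 * G0) / (c * N0 * N1 * q).
Proof.
move=> c0 N00 N10 p0 q0 N1E N0E gap; rewrite -subr_gt0.
have -> : (N0 * G1 - N1 * G0) / (c * N0 * N1 * q) - (N0 * H1 - N1 * K0) / (c * N0 * N1 * p)
   = ((N0 * G1 - N1 * G0) * (p + q) - N1 * c * q) / (c * N0 * N1 * p * q).
  by rewrite N1E N0E; field; rewrite -N1E -N0E !gt_eqF.
by rewrite divr_gt0 ?subr_gt0 ?mulr_gt0.
Qed.

Theorem mainTheorem10 (n i s : nat) :
  (2 <= n)%N -> (1 <= i)%N -> (i <= n - 1)%N -> (2 * s < i)%N ->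
  w' n i s < w n i s.
Proof.
move=> _ _ i_n s_i; have i_lt_n : (i < n)%N by lia.
pose a t : rat := #|Ls n i t|%:R; pose b t : rat := #|Ls n i.+1 t|%:R.
have Ls_gt0 : (0 < #|Ls n i s|)%N by rewrite card_Ls_gt0 //; lia.
have a_s_gt0 : 0 < a s by rewrite ltr0n.
have b_eq0 t : (i.+1 < 2 * t)%N -> b t = 0 by move=> ?; rewrite /b Ls_eq0 ?cards0.
have gap := sum_tail_gap (fun t => ler0n _ #|Ls n i.+1 t|) (card_Ls_raise0_ring _ n i)
  (card_Ls_raise1_ring _ n i) b_eq0 i_lt_n s_i a_s_gt0.
apply: ratio_lt_of_gap.
- exact: a_s_gt0.
- by rewrite ltr0n (card_L_gt0 Ls_gt0).
- by rewrite ltr0n (card_L_gt0 (t := s)) // card_Ls_gt0 //; lia.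
- by rewrite addrAC; apply: n_add_s_sub_i_gt0.
- exact: i_sub_2s_gt0.
- by rewrite card_L_sum card_Lle_sum ?card_Lge_sum -?natrD -?big_cat_nat //; lia.
- rewrite card_L_sum card_Llt_sum ?card_Lge_sum; try lia.
  by rewrite -!natrD -big_nat_recr // -big_cat_nat //; lia.
- rewrite !card_L_sum !card_Lge_sum !natr_sum.
  suff -> : n%:R - i%:R + s%:R + (i%:R - 2 * s%:R) = n%:R - s%:R :> rat by [].
  by ring.
Qed.
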